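(* For integers $n\ge0$ and $s,r\ge2$, $$\sum_{a+b=n}\zeta^\star(\{s\}^a)\,\zeta(sb+r)=\sum_{a+b=n}\zeta^\star(\{s\}^a,r,\{s\}^b),$$ the sums being over nonnegative integers $a,b$ with $a+b=n$.
   Context: $\zeta^\star(\alpha_1,\ldots,\alpha_k)=\sum_{1\le k_1\le\cdots\le k_k}k_1^{-\alpha_1}\cdots k_k^{-\alpha_k}$, with the convention $\zeta^\star(\{s\}^0)=1$; $\{s\}^a$ denotes $a$ repetitions of $s$; $\zeta$ is the Riemann zeta function. *)

From Stdlib Require Import Reals List.
From Coquelicot Require Import Coquelicot.
Open Scope R_scope.

(* zstar_trunc m N l = sum over m <= k_1 <= ... <= k_len <= N of
   k_1^{-l_1} ... k_len^{-l_len}   (empty sum-product = 1). *)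
Fixpoint zstar_trunc (m N : nat) (l : list nat) : R :=
  match l with
  | nil => 1
  | a :: l' =>
      sum_n_m (fun j => / (INR j) ^ a * zstar_trunc j N l') m N
  end.

Definition zeta_star (l : list nat) : R :=
  real (Lim_seq (fun N => zstar_trunc 1 N l)).

Definition riemann_zeta (s : nat) : R :=
  Series (fun k => / (INR (S k)) ^ s).

Definition rep (a s : nat) : list nat := repeat s a.

From Stdlib Require Import Reals List Arith Lia Lra.
From Coquelicot Require Import Coquelicot.
Open Scope R_scope.

(* With x_j = j^(-s), the truncation of zeta_star({s}^a) to indices in [L, N] is
   the complete homogeneous symmetric polynomial h_a(x_L, ..., x_N).  Summing
   over the index j that carries the entry r,
     sum_a Z(s^a, r, s^(n-a)) = sum_j j^(-r) sum_a h_a(x_L..x_j) h_(n-a)(x_j..x_N),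
   and the inner sum is h_n with the variable x_j doubled, that is
   sum_a h_a(x_L..x_N) x_j^(n-a).  Summing over j again gives the identity for
   every truncation N; the truncations are nondecreasing in N and bounded by
   2^(number of entries), so the identity passes to the limit. *)

(* Coquelicot's finite-sum lemmas are stated in abstract monoids and rings;
   these instances over R expose Rplus and Rmult to rewriting, ring and lra. *)
Lemma Rsum_n_m_mult_l (c : R) (f : nat -> R) n m :
  sum_n_m (fun k => c * f k) n m = c * sum_n_m f n m.
Proof. exact (sum_n_m_mult_l (K := R_Ring) c f n m). Qed.

Lemma Rsum_n_m_mult_r (c : R) (f : nat -> R) n m :
  sum_n_m (fun k => f k * c) n m = sum_n_m f n m * c.
Proof. exact (sum_n_m_mult_r (K := R_Ring) c f n m). Qed.

Lemma Rsum_n_m_plus (f g : nat -> R) n m :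
  sum_n_m (fun k => f k + g k) n m = sum_n_m f n m + sum_n_m g n m.
Proof. exact (sum_n_m_plus (G := R_AbelianMonoid) f g n m). Qed.

Lemma Rsum_n_m_empty (f : nat -> R) n m : (m < n)%nat -> sum_n_m f n m = 0.
Proof. exact (sum_n_m_zero (G := R_AbelianMonoid) f n m). Qed.

Lemma Rsum_n_Sm (f : nat -> R) n m : (n <= S m)%nat ->
  sum_n_m f n (S m) = sum_n_m f n m + f (S m).
Proof. exact (sum_n_Sm (G := R_AbelianMonoid) f n m). Qed.

Lemma Rsum_Sn_m (f : nat -> R) n m : (n <= m)%nat ->
  sum_n_m f n m = f n + sum_n_m f (S n) m.
Proof. exact (sum_Sn_m (G := R_AbelianMonoid) f n m). Qed.

Lemma Rsum_n_m_Chasles (f : nat -> R) n m k : (n <= S m)%nat -> (m <= k)%nat ->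
  sum_n_m f n k = sum_n_m f n m + sum_n_m f (S m) k.
Proof. exact (sum_n_m_Chasles (G := R_AbelianMonoid) f n m k). Qed.

Lemma Rsum_n_m_ext (f g : nat -> R) n m :
  (forall k, (n <= k <= m)%nat -> f k = g k) -> sum_n_m f n m = sum_n_m g n m.
Proof. exact (sum_n_m_ext_loc (G := R_AbelianMonoid) f g n m). Qed.

Lemma Rsum_n_ext (f g : nat -> R) n :
  (forall k, (k <= n)%nat -> f k = g k) -> sum_n f n = sum_n g n.
Proof. exact (sum_n_ext_loc (G := R_AbelianMonoid) f g n). Qed.

Lemma Rsum_n_m_nonneg (f : nat -> R) n m :
  (forall k, 0 <= f k) -> 0 <= sum_n_m f n m.
Proof.
  intros Hf. rewrite <- (Rmult_0_r (INR (S m - n))), <- sum_n_m_const.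
  now apply sum_n_m_le.
Qed.

Lemma Rsum_Sn (f : nat -> R) n : sum_n f (S n) = sum_n f n + f (S n).
Proof. exact (sum_Sn (G := R_AbelianMonoid) f n). Qed.

Lemma Rsum_Sn_shift (f : nat -> R) n :
  sum_n f (S n) = f 0%nat + sum_n (fun a => f (S a)) n.
Proof. unfold sum_n. rewrite Rsum_Sn_m by lia. now rewrite sum_n_m_S. Qed.

Lemma sum_n_sum_n_m_comm (f : nat -> nat -> R) n a b :
  sum_n (fun i => sum_n_m (f i) a b) n =
  sum_n_m (fun j => sum_n (fun i => f i j) n) a b.
Proof.
  induction n as [|n IH].
  - rewrite sum_O. apply Rsum_n_m_ext. intros j _. now rewrite sum_O.
  - rewrite Rsum_Sn, IH, <- Rsum_n_m_plus.
    apply Rsum_n_m_ext. intros j _. now rewrite Rsum_Sn.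
Qed.

Lemma sum_n_m_triangle_comm (f : nat -> nat -> R) m N :
  sum_n_m (fun i => sum_n_m (f i) i N) m N =
  sum_n_m (fun j => sum_n_m (fun i => f i j) m j) m N.
Proof.
  induction N as [|N IH].
  - destruct m.
    + now rewrite !sum_n_n.
    + now rewrite !Rsum_n_m_empty by lia.
  - destruct (le_lt_dec m (S N)) as [HmN|HNm].
    2: now rewrite !Rsum_n_m_empty by lia.
    rewrite (Rsum_n_m_ext _ (fun i => sum_n_m (f i) i N + f i (S N)))
      by (intros; apply Rsum_n_Sm; lia).
    rewrite Rsum_n_m_plus, !Rsum_n_Sm, IH by lia.
    rewrite (Rsum_n_m_empty _ (S N) N) by lia.
    lra.
Qed.

Lemma rep_S a s : rep (S a) s = s :: rep a s.
Proof. reflexivity. Qed.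

Lemma zstar_trunc_rep_S s n m N :
  zstar_trunc m N (rep (S n) s) =
  sum_n_m (fun j => / INR j ^ s * zstar_trunc j N (rep n s)) m N.
Proof. reflexivity. Qed.

Lemma zstar_trunc_singleton e m N :
  zstar_trunc m N (e :: nil) = sum_n_m (fun j => / INR j ^ e) m N.
Proof. apply Rsum_n_m_ext. intros j _. apply Rmult_1_r. Qed.

Lemma zstar_trunc_cons_S_lower x l m N : (m <= N)%nat ->
  zstar_trunc m N (x :: l) =
  / INR m ^ x * zstar_trunc m N l + zstar_trunc (S m) N (x :: l).
Proof. intros HmN. exact (Rsum_Sn_m _ m N HmN). Qed.

Lemma zstar_trunc_app x l1 l2 m N :
  zstar_trunc m N (l1 ++ x :: l2) =
  sum_n_m (fun j => zstar_trunc m j l1 * (/ INR j ^ x * zstar_trunc j N l2)) m N.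
Proof.
  revert m. induction l1 as [|y l1 IH]; intros m; simpl.
  - apply Rsum_n_m_ext. intros j _. symmetry. apply Rmult_1_l.
  - rewrite (Rsum_n_m_ext _ (fun i => sum_n_m (fun j =>
        / INR i ^ y * zstar_trunc i j l1 * (/ INR j ^ x * zstar_trunc j N l2)) i N)).
    2: { intros i _. rewrite IH, <- Rsum_n_m_mult_l.
         apply Rsum_n_m_ext. intros j _. ring. }
    rewrite sum_n_m_triangle_comm.
    apply Rsum_n_m_ext. intros j _. apply Rsum_n_m_mult_r.
Qed.

Section RepeatedEntry.

Variable s : nat.

Lemma sum_zstar_trunc_rep_split m N : (m <= N)%nat -> forall n L, (L <= S m)%nat ->
  sum_n (fun a => zstar_trunc L m (rep a s) * zstar_trunc (S m) N (rep (n - a) s)) n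
  = zstar_trunc L N (rep n s).
Proof.
  intros HmN n. induction n as [|n IH]; intros L HL.
  - rewrite sum_O. apply Rmult_1_l.
  - rewrite Rsum_Sn_shift, !zstar_trunc_rep_S, (Rsum_n_m_Chasles _ L m N) by lia.
    rewrite <- zstar_trunc_rep_S, Nat.sub_0_r, Rmult_1_l, Rplus_comm.
    f_equal.
    rewrite (Rsum_n_m_ext _ (fun j => sum_n (fun a => / INR j ^ s *
          zstar_trunc j m (rep a s) * zstar_trunc (S m) N (rep (n - a) s)) n)).
    2: { intros j Hj. rewrite <- IH by lia. unfold sum_n. rewrite <- Rsum_n_m_mult_l.
         apply Rsum_n_m_ext. intros a _. ring. }
    rewrite <- sum_n_sum_n_m_comm.
    apply Rsum_n_ext. intros a _. now rewrite Rsum_n_m_mult_r.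
Qed.

Lemma sum_zstar_trunc_rep_overlap_S L m N n : (L <= m <= N)%nat ->
  sum_n (fun a => zstar_trunc L m (rep a s) * zstar_trunc m N (rep (S n - a) s)) (S n) =
  / INR m ^ s * sum_n (fun a => zstar_trunc L m (rep a s) * zstar_trunc m N (rep (n - a) s)) n
  + zstar_trunc L N (rep (S n) s).
Proof.
  intros Hm.
  rewrite <- (sum_zstar_trunc_rep_split m N ltac:(lia) (S n) L ltac:(lia)).
  rewrite !Rsum_Sn, !Nat.sub_diag. unfold sum_n.
  rewrite (Rsum_n_m_ext _ (fun a =>
     / INR m ^ s * (zstar_trunc L m (rep a s) * zstar_trunc m N (rep (n - a) s))
     + zstar_trunc L m (rep a s) * zstar_trunc (S m) N (rep (S n - a) s))).
  2: { intros a Ha. replace (S n - a)%nat with (S (n - a)) by lia.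
       rewrite rep_S, zstar_trunc_cons_S_lower by lia. ring. }
  rewrite Rsum_n_m_plus, Rsum_n_m_mult_l. simpl. ring.
Qed.

Lemma sum_zstar_trunc_rep_overlap L m N : (L <= m <= N)%nat -> forall n,
  sum_n (fun a => zstar_trunc L m (rep a s) * zstar_trunc m N (rep (n - a) s)) n =
  sum_n (fun a => zstar_trunc L N (rep a s) * (/ INR m ^ s) ^ (n - a)) n.
Proof.
  intros Hm n. induction n as [|n IH].
  - rewrite !sum_O. simpl. ring.
  - rewrite sum_zstar_trunc_rep_overlap_S, IH, Rsum_Sn, Nat.sub_diag by exact Hm.
    rewrite (Rsum_n_ext (fun a => zstar_trunc L N (rep a s) * (/ INR m ^ s) ^ (S n - a))
      (fun a => / INR m ^ s * (zstar_trunc L N (rep a s) * (/ INR m ^ s) ^ (n - a)))).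
    2: { intros a Ha. replace (S n - a)%nat with (S (n - a)) by lia. simpl. ring. }
    unfold sum_n. rewrite Rsum_n_m_mult_l. simpl. ring.
Qed.

End RepeatedEntry.

Lemma inv_pow_mul_inv_pow_pow (x : R) r s k :
  / x ^ r * (/ x ^ s) ^ k = / x ^ (s * k + r).
Proof. rewrite pow_inv, pow_add, <- pow_mult, Rinv_mult. ring. Qed.

Lemma sum_zstar_trunc_insert L N n s r :
  sum_n (fun a => zstar_trunc L N (rep a s ++ r :: rep (n - a) s)) n =
  sum_n (fun a => zstar_trunc L N (rep a s) *
                  zstar_trunc L N ((s * (n - a) + r)%nat :: nil)) n.
Proof.
  rewrite (Rsum_n_ext _ (fun a => sum_n_m (fun j => zstar_trunc L j (rep a s) *
     (/ INR j ^ r * zstar_trunc j N (rep (n - a) s))) L N))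
    by (intros a _; apply zstar_trunc_app).
  rewrite sum_n_sum_n_m_comm.
  rewrite (Rsum_n_m_ext _ (fun j => sum_n (fun a => zstar_trunc L N (rep a s) *
     (/ INR j ^ r * (/ INR j ^ s) ^ (n - a))) n)).
  2: { intros j Hj.
       transitivity (/ INR j ^ r * sum_n (fun a =>
         zstar_trunc L j (rep a s) * zstar_trunc j N (rep (n - a) s)) n).
       { unfold sum_n. rewrite <- Rsum_n_m_mult_l. apply Rsum_n_m_ext. intros a _. ring. }
       rewrite sum_zstar_trunc_rep_overlap by lia.
       unfold sum_n. rewrite <- Rsum_n_m_mult_l. apply Rsum_n_m_ext. intros a _. ring. }
  rewrite <- sum_n_sum_n_m_comm.
  apply Rsum_n_ext. intros a _.
  rewrite zstar_trunc_singleton, Rsum_n_m_mult_l.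
  f_equal. apply Rsum_n_m_ext. intros j _. apply inv_pow_mul_inv_pow_pow.
Qed.

Lemma inv_pow_INR_nonneg j e : 0 <= / INR j ^ e.
Proof.
  destruct j as [|j].
  - destruct e; simpl; [lra|]. rewrite Rmult_0_l, Rinv_0. lra.
  - apply Rlt_le, Rinv_0_lt_compat, pow_lt, lt_0_INR. lia.
Qed.

Lemma zstar_trunc_nonneg l m N : 0 <= zstar_trunc m N l.
Proof.
  revert m. induction l as [|x l IH]; intros m; simpl; [lra|].
  apply Rsum_n_m_nonneg. intros j.
  apply Rmult_le_pos; [apply inv_pow_INR_nonneg | apply IH].
Qed.

Lemma zstar_trunc_le_S l m N : zstar_trunc m N l <= zstar_trunc m (S N) l.
Proof.
  revert m. induction l as [|x l IH]; intros m; simpl; [lra|].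
  destruct (le_lt_dec m (S N)) as [HmN|HNm].
  2: rewrite !Rsum_n_m_empty by lia; lra.
  rewrite Rsum_n_Sm by lia.
  assert (0 <= / INR (S N) ^ x * zstar_trunc (S N) (S N) l).
  { apply Rmult_le_pos; [apply inv_pow_INR_nonneg | apply zstar_trunc_nonneg]. }
  enough (sum_n_m (fun j => / INR j ^ x * zstar_trunc j N l) m N <=
          sum_n_m (fun j => / INR j ^ x * zstar_trunc j (S N) l) m N) by lra.
  apply sum_n_m_le. intros j.
  apply Rmult_le_compat_l; [apply inv_pow_INR_nonneg | apply IH].
Qed.

Lemma sum_inv_pow_INR_le e : (2 <= e)%nat -> forall m N,
  sum_n_m (fun j => / INR j ^ e) m N <= 2 - 2 / INR (S N).
Proof.
  intros He m N. induction N as [|N IH].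
  - destruct m as [|m].
    + rewrite sum_n_n. destruct e as [|e]; [lia|].
      simpl. rewrite Rmult_0_l, Rinv_0. lra.
    + rewrite Rsum_n_m_empty by lia. simpl. lra.
  - destruct (le_lt_dec m (S N)) as [HmN|HNm].
    2: { rewrite Rsum_n_m_empty by lia.
         assert (/ INR (S (S N)) <= 1).
         { rewrite <- Rinv_1. apply Rinv_le_contravar; [lra|].
           apply (le_INR 1). lia. }
         unfold Rdiv. lra. }
    rewrite Rsum_n_Sm by lia.
    assert (Hsq : / INR (S N) ^ e <= / INR (S N) ^ 2).
    { apply Rinv_le_contravar; [apply pow_lt, lt_0_INR; lia|].
      apply Rle_pow; [apply (le_INR 1); lia | exact He]. }
    rewrite !S_INR in *. pose proof (pos_INR N).
    set (y := INR N) in *.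
    assert (Hgap : 2 / (y + 1) - 2 / (y + 1 + 1) - / (y + 1) ^ 2
                   = y / ((y + 1) ^ 2 * (y + 2))) by (field; lra).
    assert (0 <= y / ((y + 1) ^ 2 * (y + 2))).
    { apply Rmult_le_pos; [lra|].
      apply Rlt_le, Rinv_0_lt_compat, Rmult_lt_0_compat; [apply pow_lt|]; lra. }
    lra.
Qed.

Lemma zstar_trunc_le_pow2 l : List.Forall (fun x => (2 <= x)%nat) l -> forall m N,
  zstar_trunc m N l <= 2 ^ length l.
Proof.
  induction l as [|x l IH]; intros Hl m N; simpl; [lra|].
  inversion_clear Hl as [|? ? Hx Hl'].
  apply Rle_trans with (sum_n_m (fun j => / INR j ^ x) m N * 2 ^ length l).
  - rewrite <- Rsum_n_m_mult_r. apply sum_n_m_le. intros j.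
    apply Rmult_le_compat_l; [apply inv_pow_INR_nonneg | now apply IH].
  - pose proof (sum_inv_pow_INR_le x Hx m N).
    pose proof (pow_lt 2 (length l) ltac:(lra)).
    assert (0 <= 2 / INR (S N)).
    { apply Rlt_le, Rdiv_lt_0_compat; [lra | apply lt_0_INR; lia]. }
    nra.
Qed.

Lemma is_lim_seq_zstar_trunc l : List.Forall (fun x => (2 <= x)%nat) l ->
  is_lim_seq (fun N => zstar_trunc 1 N l) (zeta_star l).
Proof.
  intros Hl.
  destruct (ex_finite_lim_seq_incr (fun N => zstar_trunc 1 N l) (2 ^ length l))
    as [z Hz].
  - intros N. apply zstar_trunc_le_S.
  - intros N. now apply zstar_trunc_le_pow2.
  - unfold zeta_star. now rewrite (is_lim_seq_unique _ _ Hz).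
Qed.

Lemma riemann_zeta_zeta_star e : riemann_zeta e = zeta_star (e :: nil).
Proof.
  unfold riemann_zeta, Series, zeta_star.
  rewrite <- (Lim_seq_incr_1 (fun N => zstar_trunc 1 N (e :: nil))).
  f_equal. apply Lim_seq_ext. intros N.
  rewrite zstar_trunc_singleton, <- sum_n_m_S. reflexivity.
Qed.

Lemma is_lim_seq_sum_n (u : nat -> nat -> R) (l : nat -> R) n :
  (forall a, is_lim_seq (u a) (l a)) ->
  is_lim_seq (fun N => sum_n (fun a => u a N) n) (sum_n l n).
Proof.
  intros Hu. induction n as [|n IH].
  - rewrite sum_O. apply (is_lim_seq_ext (u 0%nat)); [|apply Hu].
    intros N. now rewrite sum_O.
  - rewrite Rsum_Sn.
    apply (is_lim_seq_ext (fun N => sum_n (fun a => u a N) n + u (S n) N)).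
    + intros N. now rewrite Rsum_Sn.
    + now apply is_lim_seq_plus'.
Qed.

Lemma Forall_le_rep a s : (2 <= s)%nat -> List.Forall (fun x => (2 <= x)%nat) (rep a s).
Proof. intros Hs. apply Forall_forall. intros x Hx. now apply repeat_spec in Hx as ->. Qed.

Theorem proposition4p1 (n s r : nat) (hs : (2 <= s)%nat) (hr : (2 <= r)%nat) :
  sum_n (fun a => zeta_star (rep a s) * riemann_zeta (s * (n - a) + r)) n =
  sum_n (fun a => zeta_star (rep a s ++ r :: rep (n - a) s)) n.
Proof.
  set (u N := sum_n (fun a => zstar_trunc 1 N (rep a s) *
                              zstar_trunc 1 N ((s * (n - a) + r)%nat :: nil)) n).
  assert (Hlhs : is_lim_seq u
    (sum_n (fun a => zeta_star (rep a s) * riemann_zeta (s * (n - a) + r)) n)).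
  { apply is_lim_seq_sum_n. intros a. rewrite riemann_zeta_zeta_star.
    apply is_lim_seq_mult'; apply is_lim_seq_zstar_trunc.
    - now apply Forall_le_rep.
    - constructor; [nia | constructor]. }
  assert (Hrhs : is_lim_seq u
    (sum_n (fun a => zeta_star (rep a s ++ r :: rep (n - a) s)) n)).
  { apply (is_lim_seq_ext (fun N => sum_n (fun a =>
             zstar_trunc 1 N (rep a s ++ r :: rep (n - a) s)) n)).
    - intros N. apply sum_zstar_trunc_insert.
    - apply is_lim_seq_sum_n. intros a. apply is_lim_seq_zstar_trunc.
      apply Forall_app. split; [|constructor]; auto using Forall_le_rep. }
  apply is_lim_seq_unique in Hlhs, Hrhs.
  rewrite Hlhs in Hrhs. now injection Hrhs.
Qed.
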